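(* Let $\mathbf{Z}\in\mathbb{R}^{n\times m}$ with $\boldsymbol\Sigma=\mathbf{Z}^\top\mathbf{Z}$ invertible, and let $\tilde{\mathbf{Z}}$ be a GKnockoff matrix of $\mathbf{Z}$, i.e. $\tilde{\mathbf{Z}}=\mathbf{Z}(\mathbf{I}-\boldsymbol\Sigma^{-1}\operatorname{diag}\{\mathbf{s}\})+\tilde{\mathbf{U}}\mathbf{C}$ where $\mathbf{s}\in\mathbb{R}^m_+$, $\tilde{\mathbf{U}}$ lies in the null space of $\mathbf{Z}$ (i.e. $\mathbf{Z}^\top\tilde{\mathbf{U}}=\mathbf{0}$) and $\mathbf{C}$ is the Cholesky factor of $2\operatorname{diag}\{\mathbf{s}\}-\operatorname{diag}\{\mathbf{s}\}\boldsymbol\Sigma^{-1}\operatorname{diag}\{\mathbf{s}\}$. If $\mathbf{M}\in\mathbb{R}^{n\times n}$ is symmetric with $\mathbf{M}\mathbf{Z}=\mathbf{Z}$, then $\tilde{\mathbf{Z}}^M=\mathbf{M}\tilde{\mathbf{Z}}$ is also a GKnockoff matrix of $\mathbf{Z}$ (of the same form, with $\tilde{\mathbf{U}}$ replaced by $\mathbf{M}\tilde{\mathbf{U}}$, which lies in the null space of $\mathbf{Z}$). *)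

From mathcomp Require Import all_boot all_order all_algebra.
Set Implicit Arguments. Unset Strict Implicit. Unset Printing Implicit Defensive.
Import Order.TTheory GRing.Theory Num.Theory.
Local Open Scope ring_scope.

Definition is_cholesky (R : realFieldType) (m : nat) (C A : 'M[R]_m) : Prop :=
  (forall i j : 'I_m, (j < i)%N -> C i j = 0) /\
  (forall i : 'I_m, 0 <= C i i) /\
  C^T *m C = A.

Definition gknockoff_form (R : realFieldType) (n m : nat)
    (Z : 'M[R]_(n, m)) (s : 'rV[R]_m) (U : 'M[R]_(n, m)) (C : 'M[R]_m)
    (Zt : 'M[R]_(n, m)) : Prop :=
  let Sigma := Z^T *m Z in
  let D := diag_mx s in
  (forall i : 'I_m, 0 <= s 0 i) /\
  Z^T *m U = 0 /\
  is_cholesky C (2%:R *: D - D *m invmx Sigma *m D) /\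
  Zt = Z *m (1%:M - invmx Sigma *m D) + U *m C.

Definition is_gknockoff (R : realFieldType) (n m : nat)
    (Z Zt : 'M[R]_(n, m)) : Prop :=
  exists s U C, gknockoff_form Z s U C Zt.

From mathcomp Require Import all_boot all_order all_algebra.
Set Implicit Arguments. Unset Strict Implicit. Unset Printing Implicit Defensive.
Import Order.TTheory GRing.Theory Num.Theory.
Local Open Scope ring_scope.

(* Left multiplication by M fixes Z, and by symmetry M also fixes Z^T from the
   right; hence M U stays in the null space of Z^T, while M Zt keeps the
   knockoff form with the same s and C. *)

Lemma trmx_mul_sym_fixed (R : comPzSemiRingType) (n m : nat)
    (M : 'M[R]_n) (Z : 'M[R]_(n, m)) :
  M^T = M -> M *m Z = Z -> Z^T *m M = Z^T.
Proof. by move=> symM MZ; rewrite -symM -trmx_mul MZ. Qed.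

Lemma null_space_mull (R : pzSemiRingType) (n m k : nat)
    (M : 'M[R]_n) (Z : 'M[R]_(n, m)) (U : 'M[R]_(n, k)) :
  Z^T *m M = Z^T -> Z^T *m U = 0 -> Z^T *m (M *m U) = 0.
Proof. by move=> ZM ZU; rewrite mulmxA ZM. Qed.

Lemma gknockoff_form_mull (R : realFieldType) (n m : nat)
    (Z : 'M[R]_(n, m)) (s : 'rV[R]_m) (U : 'M[R]_(n, m)) (C : 'M[R]_m)
    (Zt : 'M[R]_(n, m)) (M : 'M[R]_n) :
  Z^T *m M = Z^T -> M *m Z = Z ->
  gknockoff_form Z s U C Zt -> gknockoff_form Z s (M *m U) C (M *m Zt).
Proof.
move=> ZM MZ [s_ge0 [ZU [cholC ->]]].
do !split => //; first exact: null_space_mull.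
by rewrite mulmxDr !mulmxA MZ.
Qed.

Theorem lemmaS1 (R : realFieldType) (n m : nat)
    (Z : 'M[R]_(n, m)) (s : 'rV[R]_m) (U : 'M[R]_(n, m)) (C : 'M[R]_m)
    (Zt : 'M[R]_(n, m)) (M : 'M[R]_n) :
  (Z^T *m Z) \in unitmx ->
  gknockoff_form Z s U C Zt ->
  M^T = M ->
  M *m Z = Z ->
  Z^T *m (M *m U) = 0 /\
  gknockoff_form Z s (M *m U) C (M *m Zt) /\
  is_gknockoff Z (M *m Zt).
Proof.
move=> _ knockoff symM MZ.
have ZM := trmx_mul_sym_fixed symM MZ.
have knockoffM := gknockoff_form_mull ZM MZ knockoff.
split; first by case: knockoffM => _ [].
by split; last exists s, (M *m U), C.
Qed.
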